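(* Let $\Delta_1,\Delta_2$ be simplicial complexes on $[n]$ and let $A,A',B$ be nonempty subsets of $[n]$ such that $A\cap B=A'\cap B=\emptyset$ and neither $A$ nor $A'$ meets the vertex set of $\Delta_1\cup\Delta_2$. Then $$\tilde H_i\big((A*\Delta_1)\cup(B*\Delta_2);\mathbb{K}\big)\cong\tilde H_i\big((A'*\Delta_1)\cup(B*\Delta_2);\mathbb{K}\big)\quad\text{for all } i>0.$$
   Context: A simplicial complex on $[n]$ is a finite family of subsets of $[n]$ closed under taking subsets (singletons need not belong to it); its vertex set is the union of its faces. For a nonempty $A\subseteq[n]$ and a simplicial complex $\Delta$ on $[n]$, the cone $A*\Delta$ is the simplicial complex whose facets are the sets $A\cup F$ with $F$ a facet of $\Delta$. $\tilde H_i(\,\cdot\,;\mathbb{K})$ denotes reduced simplicial homology with coefficients in the field $\mathbb{K}$. *)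

From HB Require Import structures.
From mathcomp Require Import all_boot all_order all_algebra.
Set Implicit Arguments.
Unset Strict Implicit.
Unset Printing Implicit Defensive.
Import GRing.Theory.
Local Open Scope ring_scope.

Section SimplicialComplexes.
Variable n : nat.

Definition is_complex (D : {set {set 'I_n}}) : Prop :=
  forall F G : {set 'I_n}, F \in D -> G \subset F -> G \in D.

Definition vertex_set (D : {set {set 'I_n}}) : {set 'I_n} :=
  \bigcup_(F in D) F.

Definition facets (D : {set {set 'I_n}}) : {set {set 'I_n}} :=
  [set F in D | [forall G in D, (F \subset G) ==> (G == F)]].

Definition cone (A : {set 'I_n}) (D : {set {set 'I_n}}) : {set {set 'I_n}} :=
  [set S : {set 'I_n} | [exists F in facets D, S \subset A :|: F]].

(* faces with exactly k vertices (dimension k-1); the empty face has k = 0 *)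
Definition faces (D : {set {set 'I_n}}) (k : nat) : {set {set 'I_n}} :=
  [set F in D | #|F| == k].

Variable K : fieldType.

(* coefficient of G in the boundary of F: if F = G + {v}, the sign
   (-1)^(number of vertices of F smaller than v), vertices ordered as in [n] *)
Definition bd_coef (F G : {set 'I_n}) : K :=
  if (G \subset F) && (#|F| == #|G|.+1)%N then
    \sum_(v in F :\: G) (-1) ^+ #|[set u in F | (u < v)%N]|
  else 0.

(* matrix of the augmented simplicial boundary map
   C_k (faces with k+1 vertices) -> C_{k-1} (faces with k vertices),
   acting on row vectors *)
Definition bdmx (D : {set {set 'I_n}}) (k : nat) :
  'M[K]_(#|faces D k.+1|, #|faces D k|) :=
  \matrix_(i, j) bd_coef (enum_val i) (enum_val j).

(* dimension over K of the reduced homology H~_i(D; K):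
   dim ker d_i - dim im d_{i+1} *)
Definition red_betti (D : {set {set 'I_n}}) (i : nat) : nat :=
  (\rank (kermx (bdmx D i)) - \rank (bdmx D i.+1))%N.

End SimplicialComplexes.

From HB Require Import structures.
From mathcomp Require Import all_boot all_order all_algebra.
From mathcomp Require Import zify.
Set Implicit Arguments.
Unset Strict Implicit.
Unset Printing Implicit Defensive.
Import GRing.Theory.
Local Open Scope ring_scope.

(* The complex (T * D1) :|: (B * D2) consists of the sets S with S :\: T in D1
   or S :\: B in D2.  Let t be in T and let s lie outside T, B and the vertex
   set of D1 :|: D2.  Passing from T to s |: T adds exactly the faces
   containing s, and they come in pairs S, t |: S with t \notin S.  Removing
   such a family is a collapse: the boundary rows of the faces t |: S are
   independent modulo the smaller complex (on the columns S they are diagonal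
   with entries +-1), and by dd = 0 the rows of the faces S lie in their span;
   so every reduced Betti number is unchanged.  Chaining A ~ {a} ~ {a, a'} ~
   {a'} ~ A' proves the theorem. *)

Section BoundaryCoefficients.
Variables (n : nat) (K : fieldType).
Implicit Types (F G H : {set 'I_n}) (v w : 'I_n).

Definition bd_sign F v : K := (-1) ^+ #|[set u in F | (u < v)%N]|.

Lemma bd_sign_neq0 F v : bd_sign F v != 0.
Proof. by rewrite expf_eq0 oppr_eq0 oner_eq0 andbF. Qed.

Lemma bd_signD1_lt F v w : v \in F -> (v < w)%N -> bd_sign F w = - bd_sign (F :\ v) w.
Proof.
move=> vF vw; rewrite /bd_sign.
have -> : [set u in F | (u < w)%N] = v |: [set u in F :\ v | (u < w)%N].
  by apply/setP => u; rewrite !inE; case: eqP => [->|]; rewrite ?vF ?vw.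
by rewrite cardsU1 !inE eqxx exprS mulN1r.
Qed.

Lemma bd_signD1_gt F v w : (v < w)%N -> bd_sign (F :\ w) v = bd_sign F v.
Proof.
move=> vw; rewrite /bd_sign; congr (_ ^+ _); apply: eq_card => u; rewrite !inE.
by case: eqP => // ->; rewrite ltnNge (ltnW vw) /= !andbF.
Qed.

Lemma eq_setD1 F G v : v \in F ->
  (G == F :\ v) = [&& G \subset F, #|F| == #|G|.+1 & v \notin G].
Proof.
move=> vF; have [->|] := eqVneq G (F :\ v).
  by rewrite subD1set (cardsD1 v F) vF setD11 /= eqxx.
move=> neqG; apply/esym; apply: contraNF neqG => /and3P[sGF /eqP cF vG].
have cFv : #|F :\ v| = #|G| by move: cF; rewrite (cardsD1 v F) vF => -[].
rewrite eqEcard cFv leqnn andbT.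
by apply/subsetP => u uG; rewrite !inE (subsetP sGF) // andbT; apply: contraNneq vG => <-.
Qed.

Lemma bd_coefE F G : bd_coef K F G = \sum_(v in F | G == F :\ v) bd_sign F v.
Proof.
rewrite /bd_coef; case: ifP => [/andP[sGF cF] | nGF].
  apply: eq_bigl => v; rewrite !inE andbC.
  by case vF: (v \in F); rewrite //= eq_setD1 // sGF cF.
by rewrite big_pred0 // => v; case vF: (v \in F); rewrite //= eq_setD1 // andbA nGF.
Qed.

Lemma bd_coef_neq0 F G : bd_coef K F G != 0 -> G \subset F /\ #|F| = #|G|.+1.
Proof. by rewrite /bd_coef; case: ifP => [/andP[? /eqP]|]; rewrite ?eqxx. Qed.

Lemma bd_coefD1 F v : v \in F -> bd_coef K F (F :\ v) = bd_sign F v.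
Proof.
move=> vF; rewrite bd_coefE (big_pred1 v) // => w /=.
case wF: (w \in F); last by apply/esym; apply: contraFF wF => /eqP->.
by rewrite eq_setD1 // subD1set (cardsD1 v F) vF !inE wF /= eqxx andbT negbK.
Qed.

(* The diagonal is assumed to vanish separately, so that characteristic 2 is
   covered. *)
Lemma sum_antisym_eq0 (V : zmodType) m (g : 'I_m -> 'I_m -> V) :
  (forall i, g i i = 0) -> (forall i j : 'I_m, (i < j)%N -> g j i = - g i j) ->
  \sum_i \sum_j g i j = 0.
Proof.
move=> g0 gA.
have split_g i j : g i j = (if (i < j)%N then g i j else 0) + (if (j < i)%N then g i j else 0).
  by case: ltngtP => [||/val_inj->]; rewrite ?addr0 ?add0r ?g0.
under eq_bigr do under eq_bigr do rewrite split_g.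
under eq_bigr do rewrite big_split /=.
rewrite big_split /= [X in _ + X]exchange_big -big_split /=.
apply: big1 => i _; rewrite -big_split; apply: big1 => j _ /=.
by case ij: (i < j)%N; rewrite ?addr0 // (gA _ _ ij) addrN.
Qed.

Lemma setD1C F v w : F :\ v :\ w = F :\ w :\ v.
Proof. by rewrite !setDDl setUC. Qed.

Lemma bd_coef_comp_eq0 F H : \sum_G bd_coef K F G * bd_coef K G H = 0.
Proof.
pose g v w := if [&& v \in F, w \in F :\ v & H == F :\ v :\ w]
  then bd_sign F v * bd_sign (F :\ v) w else 0.
transitivity (\sum_v \sum_w g v w).
  under eq_bigr do rewrite bd_coefE big_distrl big_mkcond /=.
  rewrite exchange_big; apply: eq_bigr => v _; rewrite -big_mkcond /=.
  case vF: (v \in F); last by rewrite big_pred0 // big1 // => w _; rewrite /g vF.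
  rewrite big_pred1_eq bd_coefE big_distrr big_mkcond; apply: eq_bigr => w _.
  by rewrite /g vF /=; case: ifP.
apply: sum_antisym_eq0 => [v | v w vw]; first by rewrite /g !inE eqxx andbF.
have wNv : (w == v) = false by apply/negbTE; rewrite neq_ltn vw orbT.
rewrite /g setD1C !inE wNv eq_sym wNv /=.
case vF: (v \in F); case wF: (w \in F); case: (H == _); rewrite /= ?oppr0 //.
by rewrite (bd_signD1_lt vF vw) (bd_signD1_gt F vw) mulNr mulrC.
Qed.

End BoundaryCoefficients.

Section BoundaryRows.
Variables (n : nat) (K : fieldType).
Implicit Types (F G : {set 'I_n}) (S D : {set {set 'I_n}}).

Definition bdrow F : 'rV[K]_(#|{set 'I_n}|) := \row_j bd_coef K F (enum_val j).

Definition bdrows S : 'M[K]_(#|S|, #|{set 'I_n}|) := \matrix_(i < #|S|) bdrow (enum_val i).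

Lemma bdrow_sub S G : G \in S -> (bdrow G <= bdrows S)%MS.
Proof. by move=> GS; apply/(eq_row_sub (enum_rank_in GS G)); rewrite rowK enum_rankK_in. Qed.

Lemma bdrows_sub S m (M : 'M_(m, #|{set 'I_n}|)) :
  {in S, forall G, bdrow G <= M}%MS -> (bdrows S <= M)%MS.
Proof. by move=> sSM; apply/row_subP => i; rewrite rowK sSM ?enum_valP. Qed.

Lemma boundary_bdrow_eq0 F : \sum_G bd_coef K F G *: bdrow G = 0.
Proof.
apply/rowP => j; rewrite summxE mxE -[RHS](bd_coef_comp_eq0 K F (enum_val j)).
by apply: eq_bigr => G _; rewrite !mxE.
Qed.

Lemma bdrow_sub_boundary F G0 m (M : 'M_(m, #|{set 'I_n}|)) :
  bd_coef K F G0 != 0 ->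
  (forall G, G != G0 -> bd_coef K F G != 0 -> (bdrow G <= M)%MS) ->
  (bdrow G0 <= M)%MS.
Proof.
move=> cF0 sM; have := boundary_bdrow_eq0 F; rewrite (bigD1 G0) //= => /eqP.
rewrite addr_eq0 => /eqP e; rewrite -(scalerK cF0 (bdrow G0)) e.
apply/scalemx_sub; rewrite eqmx_opp; apply/summx_sub => G nG.
have [->|cG] := eqVneq (bd_coef K F G) 0; first by rewrite scale0r sub0mx.
exact/scalemx_sub/sM.
Qed.

Definition col_restr S : 'M[K]_(#|{set 'I_n}|, #|S|) :=
  colsub (fun i => enum_rank (enum_val i)) 1%:M.

Lemma bdrow_col_restrE F S i : (bdrow F *m col_restr S) 0 i = bd_coef K F (enum_val i).
Proof. by rewrite mulmx_colsub mulmx1 !mxE enum_rankK. Qed.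

Lemma mul_col_restrK m (A : 'M_(m, #|{set 'I_n}|)) S :
  (forall r c, enum_val c \notin S -> A r c = 0) ->
  A *m col_restr S *m (col_restr S)^T = A.
Proof.
move=> A0; apply/matrixP => r c; rewrite mulmx_colsub mulmx1 mxE.
under eq_bigr do rewrite !mxE.
have [cS|cNS] := boolP (enum_val c \in S).
  rewrite (bigD1 (enum_rank_in cS (enum_val c))) //= enum_rankK_in // enum_valK eqxx mulr1.
  rewrite big1 ?addr0 // => i /negbTE neq_i; case: eqP => [ci|]; last by rewrite mulr0.
  have := enum_rankK_in cS cS; rewrite [in RHS]ci enum_rankK => /enum_val_inj eq_i.
  by rewrite eq_i eqxx in neq_i.
rewrite A0 // big1 // => i _; case: eqP => [ci|]; last by rewrite mulr0.
by move: cNS; rewrite ci enum_rankK enum_valP.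
Qed.

Lemma bdmxE D k : bdmx K D k = bdrows (faces D k.+1) *m col_restr (faces D k).
Proof. by apply/matrixP => i j; rewrite mulmx_colsub mulmx1 !mxE enum_rankK. Qed.

Lemma rank_bdmx D k : is_complex D -> \rank (bdmx K D k) = \rank (bdrows (faces D k.+1)).
Proof.
move=> cD; rewrite bdmxE; apply/eqP; rewrite eqn_leq mxrankM_maxl /=.
rewrite -{1}(@mul_col_restrK _ (bdrows (faces D k.+1)) (faces D k)) ?mxrankM_maxl // => r c.
rewrite !mxE; apply: contraNeq => /bd_coef_neq0 [sGF cF].
have := enum_valP r; rewrite !inE => /andP[FD /eqP cFk].
by rewrite (cD _ _ FD sGF) /= -eqSS -cF cFk.
Qed.

Lemma red_bettiE D i : is_complex D ->
  red_betti K D i = (#|faces D i.+1| - \rank (bdrows (faces D i.+1))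
                     - \rank (bdrows (faces D i.+2)))%N.
Proof. by move=> cD; rewrite /red_betti mxrank_ker !rank_bdmx. Qed.

End BoundaryRows.

Lemma eq_subsetU1 (n : nat) (t : 'I_n) (G S : {set 'I_n}) :
  t \notin G -> G \subset t |: S -> (#|S| <= #|G|)%N -> G = S.
Proof.
move=> tG sGtS cSG; apply/eqP; rewrite eqEcard cSG andbT.
apply/subsetP => u uG; have := subsetP sGtS u uG; rewrite !inE.
by case: eqP => // eut; rewrite -eut uG in tG.
Qed.

Section Collapse.
Variables (n : nat) (K : fieldType) (Y N : {set {set 'I_n}}) (t : 'I_n).
Hypotheses (Y_complex : is_complex Y) (YN_complex : is_complex (Y :\: N)).
Hypotheses (sNY : N \subset Y) (N_setU1 : {in N, forall S, t |: S \in N})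
  (N_setD1 : {in N, forall S, S :\ t \in N}).

Implicit Types (F G S : {set 'I_n}).

Local Notation X := (Y :\: N).
Local Notation P := [set S in N | t \notin S].
Local Notation tP j := [set t |: S | S in faces P j].

Lemma N_up_closed F G : F \in Y -> G \subset F -> G \in N -> F \in N.
Proof.
move=> FY sGF; apply: contraTT => FN.
have FX : F \in X by rewrite inE FN FY.
by have := YN_complex FX sGF; rewrite inE => /andP[].
Qed.

Lemma mem_tP j F : F \in tP j -> (F \in N) && (t \in F).
Proof.
by case/imsetP=> S; rewrite !inE -andbA => /and3P[SN _ _] ->; rewrite N_setU1 // setU11.
Qed.

Lemma faces_collapse j : faces Y j.+1 = faces X j.+1 :|: faces P j.+1 :|: tP j.
Proof.
apply/setP => F; rewrite !inE.
have [FN|FN] := boolP (F \in N); last first.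
  by rewrite /= orbF; apply/esym/orb_idr => /mem_tP/andP[FN' _]; rewrite FN' in FN.
rewrite (subsetP sNY F FN) /=.
have [tF|tF] := boolP (t \in F); last first.
  by apply/esym/orb_idr => /mem_tP/andP[_ tF']; rewrite tF' in tF.
apply/idP/imsetP => [cF|[S]]; last first.
  by rewrite !inE -andbA => /and3P[_ tS /eqP cS] ->; rewrite cardsU1 tS cS.
exists (F :\ t); last by rewrite setD1K.
by rewrite !inE N_setD1 // eqxx /= -eqSS -(eqP cF) (cardsD1 t F) tF.
Qed.

Lemma card_faces_collapse j :
  #|faces Y j.+1| = (#|faces X j.+1| + #|faces P j.+1| + #|faces P j|)%N.
Proof.
have setU1_inj : {in faces P j &, injective (fun S => t |: S)}.
  move=> S S'; rewrite !inE -!andbA => /and3P[_ tS _] /and3P[_ tS' _] eS.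
  by rewrite -(setU1K tS) eS setU1K.
rewrite faces_collapse !cardsU !disjoint_setI0 ?cards0 ?subn0 ?card_in_imset //.
  rewrite disjoints_subset; apply/subsetP => F; rewrite !inE; apply: contraL => /mem_tP.
  by case/andP=> -> ->; rewrite andbF.
rewrite disjoints_subset; apply/subsetP => F; rewrite !inE.
by case/andP => /andP[/negbTE-> _] _.
Qed.

Lemma bdrows_collapse_sub j :
  (bdrows K (faces Y j.+1) <= bdrows K (faces X j.+1) + bdrows K (tP j))%MS.
Proof.
set W := (bdrows K (faces X j.+1) + bdrows K (tP j))%MS.
have sub_X F : F \in faces X j.+1 -> (bdrow K F <= W)%MS.
  by move=> FX; apply: submx_trans (bdrow_sub K FX) (addsmxSl _ _).
have sub_tP F : F \in tP j -> (bdrow K F <= W)%MS.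
  by move=> FT; apply: submx_trans (bdrow_sub K FT) (addsmxSr _ _).
apply/bdrows_sub => F; rewrite faces_collapse !in_setU -orbA => /or3P[/sub_X//|FP|/sub_tP//].
move: FP; rewrite !inE -andbA => /and3P[FN tF /eqP cF].
have tFN : t |: F \in N := N_setU1 FN.
apply: (@bdrow_sub_boundary _ _ (t |: F)) => [|G nGF /bd_coef_neq0[sGtF cG]].
  by rewrite -{2}(setU1K tF) bd_coefD1 ?setU11 ?bd_sign_neq0.
have GY : G \in faces Y j.+1.
  rewrite !inE (Y_complex (subsetP sNY _ tFN) sGtF) /=.
  by apply/eqP; move: cG; rewrite cardsU1 tF cF add1n => -[->].
move: GY; rewrite faces_collapse !in_setU -orbA => /or3P[/sub_X//|GP|/sub_tP//].
move: GP; rewrite !inE -andbA => /and3P[_ tG /eqP cG'].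
by rewrite (eq_subsetU1 tG sGtF) ?cF ?cG' ?eqxx in nGF.
Qed.

Lemma bdrows_X_ker j :
  (bdrows K (faces X j.+1) <= kermx (col_restr K (faces P j)))%MS.
Proof.
apply/bdrows_sub => F; rewrite !inE => /andP[/andP[FN FY] _].
apply/sub_kermxP/rowP => i; rewrite bdrow_col_restrE mxE; apply/eqP.
apply: contraNT FN => /bd_coef_neq0[sGF _]; apply: N_up_closed FY sGF _.
by have := enum_valP i; rewrite !inE -andbA => /and3P[].
Qed.

Lemma delta_sub_collapse j i :
  (delta_mx (0 : 'I_1) i <= bdrows K (faces Y j.+1) *m col_restr K (faces P j))%MS.
Proof.
have := enum_valP i; rewrite !inE -andbA => /and3P[_ tS /eqP cS].
have c0 : bd_coef K (t |: enum_val i) (enum_val i) != 0.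
  by rewrite -{2}(setU1K tS) bd_coefD1 ?setU11 ?bd_sign_neq0.
have e : bdrow K (t |: enum_val i) *m col_restr K (faces P j)
         = bd_coef K (t |: enum_val i) (enum_val i) *: delta_mx 0 i.
  apply/rowP => i'; rewrite bdrow_col_restrE !mxE eqxx /=.
  have [<-|ne] := eqVneq i' i; first by rewrite mulr1.
  rewrite mulr0; apply/eqP; apply: contraNT ne => /bd_coef_neq0[sGtS cG].
  have := enum_valP i'; rewrite !inE -andbA => /and3P[_ tS' /eqP cS'].
  by apply/eqP/enum_val_inj/(eq_subsetU1 tS' sGtS); rewrite cS cS'.
rewrite -(scalerK c0 (delta_mx 0 i)) -e; apply/scalemx_sub/submxMr/bdrow_sub.
rewrite faces_collapse !in_setU; apply/orP; right.
by apply/imsetP; exists (enum_val i); rewrite ?enum_valP.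
Qed.

Lemma rank_bdrows_collapse j :
  \rank (bdrows K (faces Y j.+1)) = (\rank (bdrows K (faces X j.+1)) + #|faces P j|)%N.
Proof.
apply/eqP; rewrite eqn_leq; apply/andP; split.
  rewrite (leq_trans (mxrankS (bdrows_collapse_sub j))) //.
  rewrite (leq_trans (mxrank_adds_leqif _ _).1) // leq_add2l.
  exact: leq_trans (rank_leq_row _) (leq_imset_card _ _).
rewrite -[\rank (bdrows K (faces Y j.+1))](mxrank_mul_ker _ (col_restr K (faces P j))).
rewrite [X in (_ <= X)%N]addnC leq_add //.
  rewrite mxrankS // sub_capmx bdrows_X_ker andbT.
  by apply/bdrows_sub => F FX; apply: bdrow_sub; rewrite faces_collapse !in_setU FX.
rewrite -{1}(mxrank1 K #|faces P j|) mxrankS //.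
by apply/row_subP => i; rewrite row1 delta_sub_collapse.
Qed.

Lemma red_betti_collapse i : red_betti K Y i = red_betti K X i.
Proof.
rewrite !red_bettiE // !rank_bdrows_collapse card_faces_collapse.
have := rank_leq_row (bdrows K (faces X i.+1)); lia.
Qed.

End Collapse.

Section Cones.
Variable n : nat.
Implicit Types (A T F G H S : {set 'I_n}) (D : {set {set 'I_n}}).

Lemma setU1D (a : 'I_n) A T : a \in T -> (a |: A) :\: T = A :\: T.
Proof. by move=> aT; apply/setP => u; rewrite !inE; case: eqP => // ->; rewrite aT. Qed.

Lemma setD1D (a : 'I_n) A T : a \in T -> (A :\ a) :\: T = A :\: T.
Proof. by move=> aT; apply/setP => u; rewrite !inE; case: eqP => // ->; rewrite aT. Qed.

Lemma setDU1r (a : 'I_n) A T : a \notin A -> A :\: (a |: T) = A :\: T.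
Proof.
by move=> aA; apply/setP => u; rewrite !inE; case: eqP => // ->; rewrite (negbTE aA) !andbF.
Qed.

Lemma sub_facet D G : G \in D -> exists2 F, F \in facets D & G \subset F.
Proof.
move=> GD; have GP : (G \in D) && (G \subset G) by rewrite GD subxx.
have [F /andP[FD sGF] Fmax] :=
  @arg_maxnP _ G (fun F => (F \in D) && (G \subset F)) (fun F => #|F|) GP.
exists F => //; rewrite inE FD; apply/forall_inP => H HD; apply/implyP => sFH.
by rewrite eq_sym eqEcard sFH; apply: Fmax; rewrite HD (subset_trans sGF sFH).
Qed.

Lemma mem_cone A D S : is_complex D -> (S \in cone A D) = (S :\: A \in D).
Proof.
move=> cD; rewrite inE; apply/existsP/idP => [[F /andP[]]|SAD].
  rewrite inE => /andP[FD _] sSAF; apply: cD FD _.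
  by rewrite subDset.
have [F Ff sSAF] := sub_facet SAD; exists F; rewrite Ff /=.
by rewrite -subDset.
Qed.

Lemma cone_complex A D : is_complex D -> is_complex (cone A D).
Proof. by move=> cD F G; rewrite !mem_cone // => FAD sGF; apply: cD FAD (setSD _ sGF). Qed.

Lemma complexU D D' : is_complex D -> is_complex D' -> is_complex (D :|: D').
Proof.
move=> cD cD' F G; rewrite !inE => /orP[FD|FD] sGF; first by rewrite (cD _ _ FD sGF).
by rewrite (cD' _ _ FD sGF) orbT.
Qed.

Lemma mem_vertex_set D G v : G \in D -> v \in G -> v \in vertex_set D.
Proof. by move=> GD; apply/subsetP/bigcup_sup. Qed.

End Cones.

Section ConeUnion.
Variables (n : nat) (K : fieldType) (D1 D2 : {set {set 'I_n}}) (B : {set 'I_n}).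
Hypotheses (D1_complex : is_complex D1) (D2_complex : is_complex D2).
Implicit Types (T S : {set 'I_n}).

Local Notation V := (vertex_set (D1 :|: D2)).
Local Notation cone_union T := (cone T D1 :|: cone B D2).

Lemma cone_union_complex T : is_complex (cone_union T).
Proof. by apply: complexU; apply: cone_complex. Qed.

Lemma red_betti_cone_union_setU1 T s t i :
  t \in T -> s \notin T -> s \notin B -> s \notin V ->
  red_betti K (cone_union (s |: T)) i = red_betti K (cone_union T) i.
Proof.
move=> tT sT sB sV.
have s_notin_face S : S \in D1 :|: D2 -> s \notin S.
  by move=> SD; apply: contra sV; apply: mem_vertex_set SD.
have s_notin_D1 S : s \in S -> (S \in D1) = false.
  by move=> sS; apply: contraTF sS => SD; rewrite s_notin_face // in_setU SD.
have s_notin_D2 S : s \in S -> (S \in D2) = false.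
  by move=> sS; apply: contraTF sS => SD; rewrite s_notin_face // in_setU SD orbT.
(* The faces containing s; toggling t \in T preserves this family. *)
pose N := [set S : {set 'I_n} | s \in S & S :\: (s |: T) \in D1].
have eYN : cone_union (s |: T) :\: N = cone_union T.
  apply/setP => S; rewrite in_setD !in_setU !mem_cone // in_set.
  have [sS|sS] /= := boolP (s \in S).
    by rewrite (s_notin_D1 (S :\: T)) ?(s_notin_D2 (S :\: B)) ?orbF ?andNb // !inE sS ?sB ?sT.
  by rewrite setDU1r.
have tsT : t \in s |: T by rewrite in_setU1 tT orbT.
have sNt : s != t by apply: contraNneq sT => ->.
rewrite -eYN; apply: (@red_betti_collapse _ _ _ _ t) => [||| S | S].
- exact: cone_union_complex.
- by rewrite eYN; apply: cone_union_complex.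
- by apply/subsetP => S; rewrite in_set in_setU mem_cone // => /andP[_ ->].
- by rewrite !in_set setU1D // => /andP[-> ->]; rewrite orbT.
- by rewrite !in_set setD1D // !inE sNt => /andP[-> ->].
Qed.

Lemma red_betti_cone_union_sub T S t i :
  t \in T -> T \subset S -> [disjoint S & B :|: V] ->
  red_betti K (cone_union S) i = red_betti K (cone_union T) i.
Proof.
move=> tT; move: {2}#|S :\: T| (erefl #|S :\: T|) => d.
elim: d S => [|d IH] S cST sTS dS.
  have sST : S \subset T by rewrite -setD_eq0 -cards_eq0 cST.
  by have -> : S = T by apply/eqP; rewrite eqEsubset sST.
have [s /setDP[sS sNT]] : exists s, s \in S :\: T by apply/set0Pn; rewrite -cards_eq0 cST.
have := disjointFr dS sS; rewrite in_setU => /norP[sB sV].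
rewrite -(setD1K sS) (red_betti_cone_union_setU1 (t := t)) ?setD11 //; last first.
  by rewrite in_setD1 (subsetP sTS) // andbT; apply: contraNneq sNT => <-.
apply: IH; last by apply: disjointWl dS; apply: subD1set.
  by move: cST; rewrite (cardsD1 s) !inE sS sNT setDDl setUC -setDDl => -[].
by apply/subsetP => u uT; rewrite in_setD1 (subsetP sTS) // andbT; apply: contraNneq sNT => <-.
Qed.

End ConeUnion.

Theorem corollary3p3 (n : nat) (K : fieldType)
  (D1 D2 : {set {set 'I_n}}) (A A' B : {set 'I_n}) :
  is_complex D1 -> is_complex D2 ->
  A != set0 -> A' != set0 -> B != set0 ->
  A :&: B = set0 -> A' :&: B = set0 ->
  A :&: vertex_set (D1 :|: D2) = set0 ->
  A' :&: vertex_set (D1 :|: D2) = set0 ->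
  forall i : nat, (0 < i)%N ->
    red_betti K (cone A D1 :|: cone B D2) i =
    red_betti K (cone A' D1 :|: cone B D2) i.
Proof.
move=> c1 c2 /set0Pn[a aA] /set0Pn[a' a'A] _ AB A'B AV A'V i _.
have disjAA' : [disjoint A :|: A' & B :|: vertex_set (D1 :|: D2)].
  by rewrite -setI_eq0 setIUl !setIUr AB AV A'B A'V !setU0.
have red_sub (T S : {set 'I_n}) t : t \in T -> T \subset S -> S \subset A :|: A' ->
    red_betti K (cone S D1 :|: cone B D2) i = red_betti K (cone T D1 :|: cone B D2) i.
  by move=> tT sTS sS; apply: red_betti_cone_union_sub tT sTS (disjointWl sS disjAA').
have saa' : [set a; a'] \subset A :|: A'.
  by rewrite subUset !sub1set !inE aA a'A orbT.
rewrite (red_sub [set a] A a) ?set11 ?sub1set ?subsetUl //.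
rewrite -(red_sub [set a] [set a; a'] a) ?set11 ?subsetUl //.
rewrite (red_sub [set a'] [set a; a'] a') ?set11 ?subsetUr //.
by rewrite -(red_sub [set a'] A' a') ?set11 ?sub1set ?subsetUr.
Qed.
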